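(* Let $\mathcal A$ be a regular multiplier Hopf algebroid with a modular base weight $(\mu_B,\mu_C)$ and antipode $S$. Let $\phi$ be a left integral and $\psi$ a right integral for $(\mathcal A,\mu_B,\mu_C)$. Then for all $a\in A$, $x\in B$, $y\in C$: $$\phi(ya)=\phi(a\,S^2(y))\qquad\text{and}\qquad \psi(ax)=\psi(S^2(x)\,a).$$
   Context: A regular multiplier Hopf algebroid $\mathcal A=(A,B,C,S_B,S_C,\Delta_B,\Delta_C)$ (Timmermann–Van Daele) consists of a non-degenerate idempotent complex algebra $A$, non-degenerate idempotent commuting subalgebras $B,C\subseteq M(A)$, anti-isomorphisms $S_B:B\to C$, $S_C:C\to B$, a left comultiplication $\Delta_B$ and right comultiplication $\Delta_C$ satisfying the axioms of that notion; its antipode $S$ is an anti-automorphism of $A$ extending to $M(A)$ with $S|_B=S_B$, $S|_C=S_C$. ${}_BA\otimes A^B$ is the quotient of $A\otimes A$ by the span of $xa\otimes b-a\otimes S_B(x)b$; slice maps: for $\omega:A\to B$ with $\omega(xa)=x\omega(a)$, $\omega\otimes\iota:c\otimes d\mapsto S_B(\omega(c))d$; for $\omega:A\to B$ with $\omega(S_B(x)a)=\omega(a)x$, $\iota\otimes\omega:c\otimes d\mapsto\omega(d)c$. Partial right integral: linear ${}_B\psi_B:A\to B$ with ${}_B\psi_B(xax')=x{}_B\psi_B(a)x'$ and $({}_B\psi_B\otimes\iota)(\Delta_B(a)(1\otimes b))={}_B\psi_B(a)b$. Partial left integral: linear ${}_C\phi_C:A\to C$ with ${}_C\phi_C(yay')=y{}_C\phi_C(a)y'$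 and $(\iota\otimes S_B^{-1}\circ{}_C\phi_C)(\Delta_B(b)(a\otimes1))={}_C\phi_C(b)a$. A base weight is a pair $(\mu_B,\mu_C)$ of faithful linear functionals on $B$, $C$; it is modular if $\mu_B(xx')=\mu_B(x'\,S_B^{-1}S_C^{-1}(x))$ and $\mu_C(yy')=\mu_C(y'\,S_BS_C(y))$ for all $x,x'\in B$, $y,y'\in C$. A functional $\omega$ on $A$ is factorizable if there are linear ${}_B\omega,\omega_B:A\to B$, ${}_C\omega,\omega_C:A\to C$ with ${}_B\omega(xa)=x{}_B\omega(a)$, $\omega_B(ax)=\omega_B(a)x$, ${}_C\omega(ya)=y{}_C\omega(a)$, $\omega_C(ay)=\omega_C(a)y$ and $\omega=\mu_B\circ{}_B\omega=\mu_B\circ\omega_B=\mu_C\circ{}_C\omega=\mu_C\circ\omega_C$. A left integral is a factorizable functional $\mu_C\circ{}_C\phi_C$ with ${}_C\phi_C$ a partial left integral; a right integral is a factorizable functional $\mu_B\circ{}_B\psi_B$ with ${}_B\psi_B$ a partial right integral. *)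

From HB Require Import structures.
From Stdlib Require List.
From mathcomp Require Import all_boot all_order all_algebra.
Set Implicit Arguments.
Unset Strict Implicit.
Unset Printing Implicit Defensive.
Import GRing.Theory.
Local Open Scope ring_scope.

Section MHA.
Variables (K : fieldType) (A : lmodType K) (mul : A -> A -> A).

Definition alg_axioms : Prop :=
  [/\ (forall a b c, mul (mul a b) c = mul a (mul b c)),
      (forall (k : K) a a' b, mul (k *: a + a') b = k *: mul a b + mul a' b) &
      (forall (k : K) a b b', mul a (k *: b + b') = k *: mul a b + mul a b')].

Definition nondegenerate_alg : Prop :=
  (forall a, (forall b, mul a b = 0) -> a = 0) /\
  (forall a, (forall b, mul b a = 0) -> a = 0).

Definition idempotent_alg : Prop :=
  forall a, exists s : seq (A * A), a = \sum_(p <- s) mul p.1 p.2.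

Record mult := Mult { mL : A -> A ; mR : A -> A }.
(* mL m a = "m a",  mR m a = "a m" *)

Definition is_mult (m : mult) : Prop := forall a b, mul (mR m a) b = mul a (mL m b).

Definition mmul (m n : mult) : mult :=
  Mult (fun a => mL m (mL n a)) (fun a => mR n (mR m a)).
Definition madd (m n : mult) : mult :=
  Mult (fun a => mL m a + mL n a) (fun a => mR m a + mR n a).
Definition mscale (k : K) (m : mult) : mult :=
  Mult (fun a => k *: mL m a) (fun a => k *: mR m a).
Definition mzero : mult := Mult (fun _ => 0) (fun _ => 0).

Definition nd_idem_subalg (P : mult -> Prop) : Prop :=
  [/\ (forall x, P x -> is_mult x),
      P mzero /\ (forall x y, P x -> P y -> P (madd x y)) /\
      (forall k x, P x -> P (mscale k x)) /\ (forall x y, P x -> P y -> P (mmul x y)),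
      (forall x, P x -> (forall y, P y -> mmul x y = mzero) -> x = mzero) /\
      (forall x, P x -> (forall y, P y -> mmul y x = mzero) -> x = mzero),
      (forall x, P x -> exists s : seq (mult * mult),
          (forall p, List.In p s -> P p.1 /\ P p.2) /\
          x = \big[madd/mzero]_(p <- s) mmul p.1 p.2) &
      [/\ (forall a, exists s : seq (mult * A),
             (forall p, List.In p s -> P p.1) /\ a = \sum_(p <- s) mL p.1 p.2),
          (forall a, exists s : seq (mult * A),
             (forall p, List.In p s -> P p.1) /\ a = \sum_(p <- s) mR p.1 p.2),
          (forall a, (forall x, P x -> mL x a = 0) -> a = 0) &
          (forall a, (forall x, P x -> mR x a = 0) -> a = 0)]].

Definition anti_iso (P Q : mult -> Prop) (S : mult -> mult) : Prop :=
  [/\ (forall x, P x -> Q (S x)),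
      (forall y, Q y -> exists2 x, P x & S x = y),
      (forall x x', P x -> P x' -> S x = S x' -> x = x'),
      (forall k x x', P x -> P x' -> S (madd (mscale k x) x') = madd (mscale k (S x)) (S x')) &
      (forall x x', P x -> P x' -> S (mmul x x') = mmul (S x') (S x))].

(* Elements of the balanced tensor product  _B A (x) A^B  (quotient of A (x) A by
   xa (x) b - a (x) S_B(x) b) are given by representatives: finite formal sums.
   The slice maps used below are well defined on the quotient, so they may be
   evaluated on representatives.
     DBr a b  represents  Delta_B(a)(1 (x) b)
     DBl b a  represents  Delta_B(b)(a (x) 1)                                 *)
Record mha_data := MHAData {
  inB : mult -> Prop ;
  inC : mult -> Prop ;
  S_B : mult -> mult ;
  S_C : mult -> mult ;
  DBr : A -> A -> seq (A * A) ;
  DBl : A -> A -> seq (A * A) ;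
  antS : A -> A ;
  antSM : mult -> mult
}.

Variable H : mha_data.

Definition is_RMHA : Prop :=
  [/\ alg_axioms /\ nondegenerate_alg /\ idempotent_alg,
      nd_idem_subalg (inB H) /\ nd_idem_subalg (inC H),
      (forall x y, inB H x -> inC H y -> mmul x y = mmul y x),
      anti_iso (inB H) (inC H) (S_B H) /\ anti_iso (inC H) (inB H) (S_C H) &
      [/\ bijective (antS H),
          (forall (k : K) a b, antS H (k *: a + b) = k *: antS H a + antS H b),
          (forall a b, antS H (mul a b) = mul (antS H b) (antS H a)),
          (forall m, is_mult m -> is_mult (antSM H m) /\
             forall a, antS H (mL m a) = mR (antSM H m) (antS H a) /\
                       antS H (mR m a) = mL (antSM H m) (antS H a)) &
          (forall x, inB H x -> antSM H x = S_B H x) /\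
          (forall y, inC H y -> antSM H y = S_C H y)]].

Definition faithful_lin (P : mult -> Prop) (mu : mult -> K) : Prop :=
  [/\ (forall k x x', P x -> P x' -> mu (madd (mscale k x) x') = k * mu x + mu x'),
      (forall x, P x -> (forall x', P x' -> mu (mmul x x') = 0) -> x = mzero) &
      (forall x, P x -> (forall x', P x' -> mu (mmul x' x) = 0) -> x = mzero)].

(* modular: mu_B(x x') = mu_B(x' S_B^-1 S_C^-1 (x)), mu_C(y y') = mu_C(y' S_B S_C (y)).
   S_B^-1 S_C^-1 (x) is the unique z in B with S_C (S_B z) = x. *)
Definition modular_base_weight (muB muC : mult -> K) : Prop :=
  [/\ faithful_lin (inB H) muB, faithful_lin (inC H) muC,
      (forall x x' z, inB H x -> inB H x' -> inB H z -> S_C H (S_B H z) = x ->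
          muB (mmul x x') = muB (mmul x' z)) &
      (forall y y', inC H y -> inC H y' ->
          muC (mmul y y') = muC (mmul y' (S_B H (S_C H y))))].

Definition lin_fun (f : A -> K) : Prop :=
  forall (k : K) a b, f (k *: a + b) = k * f a + f b.
Definition lin_mult (f : A -> mult) : Prop :=
  forall (k : K) a b, f (k *: a + b) = madd (mscale k (f a)) (f b).

Definition factorizable (muB muC : mult -> K) (w : A -> K) : Prop :=
  exists bw wb cw wc : A -> mult,
    [/\ [/\ lin_mult bw, lin_mult wb, lin_mult cw & lin_mult wc],
        [/\ forall a, inB H (bw a), forall a, inB H (wb a),
            forall a, inC H (cw a) & forall a, inC H (wc a)],
        [/\ forall x a, inB H x -> bw (mL x a) = mmul x (bw a),
            forall x a, inB H x -> wb (mR x a) = mmul (wb a) x,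
            forall y a, inC H y -> cw (mL y a) = mmul y (cw a) &
            forall y a, inC H y -> wc (mR y a) = mmul (wc a) y] &
        forall a, [/\ w a = muB (bw a), w a = muB (wb a),
                      w a = muC (cw a) & w a = muC (wc a)]].

Definition partial_right_integral (p : A -> mult) : Prop :=
  [/\ lin_mult p, (forall a, inB H (p a)),
      (forall x x' a, inB H x -> inB H x' ->
          p (mL x (mR x' a)) = mmul (mmul x (p a)) x') &
      (* (psi (x) id)(Delta_B(a)(1 (x) b)) = psi(a) b, slice c(x)d |-> S_B(psi c) d *)
      (forall a b, \sum_(q <- DBr H a b) mL (S_B H (p q.1)) q.2 = mL (p a) b)].

Definition partial_left_integral (p : A -> mult) : Prop :=
  [/\ lin_mult p, (forall a, inC H (p a)),
      (forall y y' a, inC H y -> inC H y' ->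
          p (mL y (mR y' a)) = mmul (mmul y (p a)) y') &
      (* (id (x) S_B^-1 o phi)(Delta_B(b)(a (x) 1)) = phi(b) a,
         slice c(x)d |-> w(d) c  with  w(d) = S_B^-1(phi d) *)
      (forall b a (w : A -> mult),
          (forall d, inB H (w d) /\ S_B H (w d) = p d) ->
          \sum_(q <- DBl H b a) mL (w q.2) q.1 = mL (p b) a)].

Definition left_integral (muB muC : mult -> K) (phi : A -> K) : Prop :=
  factorizable muB muC phi /\
  exists p, partial_left_integral p /\ forall a, phi a = muC (p a).

Definition right_integral (muB muC : mult -> K) (psi : A -> K) : Prop :=
  factorizable muB muC psi /\
  exists p, partial_right_integral p /\ forall a, psi a = muB (p a).

End MHA.

(* Write [phi = mu_C o p] with [p = _C phi_C]. Since [p] is a C-bimodule map,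
   [phi (y u c v) = mu_C (y (u p(c) v))], and modularity of [mu_C] moves [y]
   to the right as [S_B S_C y = S^2 y], giving [phi (u c v S^2 y)]. As the
   elements [u c v] with [u, v] in C span A, this is the claim for [phi]; the
   claim for [psi] is the mirror image over B. *)
From HB Require Import structures.
From mathcomp Require Import all_boot all_order all_algebra.
From Stdlib Require List.
Set Implicit Arguments.
Unset Strict Implicit.
Unset Printing Implicit Defensive.
Import GRing.Theory.
Local Open Scope ring_scope.

Lemma additive_eq0 (U V : zmodType) (f : U -> V) :
  {morph f : a b / a + b} -> f 0 = 0.
Proof. by move=> fD; apply: (addrI (f 0)); rewrite -fD !addr0. Qed.

Lemma additive_sum_eq0 (U V : zmodType) (T : Type) (f : U -> V)
    (s : seq T) (G : T -> U) :
  {morph f : a b / a + b} -> (forall t, List.In t s -> f (G t) = 0) ->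
  f (\sum_(t <- s) G t) = 0.
Proof.
move=> fD; elim: s => [|t s IHs] Gs0; first by rewrite big_nil additive_eq0.
rewrite big_cons fD Gs0 /=; last by left.
by rewrite IHs ?addr0 // => t' st'; apply: Gs0; right.
Qed.

Section NondegenerateAlgebra.
Variables (K : fieldType) (A : lmodType K) (mul : A -> A -> A).
Hypotheses (alg : alg_axioms mul) (nd : nondegenerate_alg mul).

Lemma amulDr c a b : mul c (a + b) = mul c a + mul c b.
Proof. by case: alg => _ _ mulZDr; rewrite -[a]scale1r mulZDr !scale1r. Qed.

Lemma amulDl a b c : mul (a + b) c = mul a c + mul b c.
Proof. by case: alg => _ mulZDl _; rewrite -[a]scale1r mulZDl !scale1r. Qed.

Lemma amulBr c a b : mul c (a - b) = mul c a - mul c b.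
Proof.
case: alg => _ _ mulZDr.
by rewrite addrC -scaleN1r mulZDr scaleN1r addrC.
Qed.

Lemma amulBl a b c : mul (a - b) c = mul a c - mul b c.
Proof.
case: alg => _ mulZDl _.
by rewrite addrC -scaleN1r mulZDl scaleN1r addrC.
Qed.

Lemma amul_lcancel a b : (forall c, mul c a = mul c b) -> a = b.
Proof.
move=> eq_ab; apply/eqP; rewrite -subr_eq0; apply/eqP.
by case: nd => _ nd_r; apply: nd_r => c; rewrite amulBr eq_ab subrr.
Qed.

Lemma amul_rcancel a b : (forall c, mul a c = mul b c) -> a = b.
Proof.
move=> eq_ab; apply/eqP; rewrite -subr_eq0; apply/eqP.
by case: nd => nd_l _; apply: nd_l => c; rewrite amulBl eq_ab subrr.
Qed.

Section Multiplier.
Variable m : mult A.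
Hypothesis m_mult : is_mult mul m.

Lemma mL_add : {morph mL m : a b / a + b}.
Proof.
move=> a b; apply: amul_lcancel => c.
by rewrite -m_mult !amulDr -!m_mult.
Qed.

Lemma mR_add : {morph mR m : a b / a + b}.
Proof.
move=> a b; apply: amul_rcancel => c.
by rewrite m_mult !amulDl !m_mult.
Qed.

Lemma mR_mul a b : mR m (mul a b) = mul a (mR m b).
Proof.
case: alg => mulA _ _; apply: amul_rcancel => c.
by rewrite m_mult !mulA m_mult.
Qed.

End Multiplier.

Lemma mL_mR m n a : is_mult mul m -> is_mult mul n ->
  mL m (mR n a) = mR n (mL m a).
Proof.
move=> m_mult n_mult; apply: amul_lcancel => c.
by rewrite -m_mult -(mR_mul n_mult) -(mR_mul n_mult) m_mult.
Qed.

Section Subalgebra.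
Variable P : mult A -> Prop.
Hypothesis P_nd : nd_idem_subalg mul P.

Lemma eq0_on_sandwiches (f : A -> K) :
  {morph f : a b / a + b} ->
  (forall u v c, P u -> P v -> f (mL u (mR v c)) = 0) -> forall a, f a = 0.
Proof.
case: P_nd => P_mult _ _ _ [PA AP _ _] fD f_sandwich.
have f_right v b : P v -> f (mR v b) = 0.
  move=> Pv; have [s [Ps ->]] := PA b.
  rewrite (big_morph _ (mR_add (P_mult _ Pv)) (additive_eq0 (mR_add (P_mult _ Pv)))).
  apply: additive_sum_eq0 => // t st.
  by rewrite -(mL_mR _ (P_mult _ (Ps _ st)) (P_mult _ Pv)); exact: f_sandwich (Ps _ st) Pv.
move=> a; have [s [Ps ->]] := AP a.
by apply: additive_sum_eq0 => // t st; exact: f_right (Ps _ st).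
Qed.

Lemma twisted_trace_bimodular (p : A -> mult A) (mu : mult A -> K) t t' :
  lin_mult p -> (forall a, P (p a)) ->
  (forall u v a, P u -> P v -> p (mL u (mR v a)) = mmul (mmul u (p a)) v) ->
  (forall k m m', P m -> P m' -> mu (madd (mscale k m) m') = k * mu m + mu m') ->
  P t -> P t' -> (forall m, P m -> mu (mmul t m) = mu (mmul m t')) ->
  forall a, mu (p (mL t a)) = mu (p (mR t' a)).
Proof.
case: (P_nd) => P_mult [_ [_ [_ P_mul]]] _ _ _.
move=> p_lin pP p_bimod mu_lin Pt Pt' mu_twist a.
have mup_add b c : mu (p (b + c)) = mu (p b) + mu (p c).
  by rewrite -[b]scale1r p_lin mu_lin ?pP // mul1r scale1r.
apply/eqP; rewrite -subr_eq0; apply/eqP.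
pose f b := mu (p (mL t b)) - mu (p (mR t' b)); rewrite -/(f a).
apply: eq0_on_sandwiches => [b c|u v c Pu Pv].
  by rewrite /f (mL_add (P_mult _ Pt)) (mR_add (P_mult _ Pt')) !mup_add opprD addrACA.
have Ptu : P (mmul t u) by exact: P_mul.
have Pvt' : P (mmul v t') by exact: P_mul.
have Pupcv : P (mmul (mmul u (p c)) v) by apply: (P_mul) => //; exact: P_mul.
rewrite /f -(mL_mR _ (P_mult _ Pu) (P_mult _ Pt')).
have -> : mL t (mL u (mR v c)) = mL (mmul t u) (mR v c) by [].
have -> : mR t' (mR v c) = mR (mmul v t') c by [].
rewrite !p_bimod //.
have -> : mmul (mmul (mmul t u) (p c)) v = mmul t (mmul (mmul u (p c)) v) by [].
by rewrite mu_twist //; exact: subrr.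
Qed.

End Subalgebra.
End NondegenerateAlgebra.

Theorem lemma4p10 (K : fieldType) (A : lmodType K) (mul : A -> A -> A)
  (H : mha_data A) (muB muC : mult A -> K) (phi psi : A -> K) :
  is_RMHA mul H -> modular_base_weight H muB muC ->
  left_integral H muB muC phi -> right_integral H muB muC psi ->
  forall (a : A) (x y : mult A), inB H x -> inC H y ->
    phi (mL y a) = phi (mR (antSM H (antSM H y)) a) /\
    psi (mR x a) = psi (mL (antSM H (antSM H x)) a).
Proof.
move=> [[alg [nd _]] [B_nd C_nd] _ [[S_BC _ _ _ _] [S_CB _ _ _ _]] [_ _ _ _ [SM_B SM_C]]].
move=> [[muB_lin _ _] [muC_lin _ _] muB_mod muC_mod].
move=> [_ [p [[p_lin pC p_bimod _] phi_p]]] [_ [q [[q_lin qB q_bimod _] psi_q]]].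
move=> a x y Bx Cy; split.
- rewrite (SM_C _ Cy) (SM_B _ (S_CB _ Cy)) !phi_p.
  apply: (twisted_trace_bimodular alg nd C_nd p_lin pC p_bimod muC_lin Cy).
    exact/S_BC/S_CB.
  by move=> m Cm; apply: muC_mod.
- rewrite (SM_B _ Bx) (SM_C _ (S_BC _ Bx)) !psi_q; symmetry.
  apply: (twisted_trace_bimodular alg nd B_nd q_lin qB q_bimod muB_lin _ Bx).
    exact/S_CB/S_BC.
  by move=> m Bm; apply: muB_mod (S_CB _ (S_BC _ Bx)) Bm Bx erefl.
Qed.
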